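(* Let $K$ be a field, let $\mathscr C$ be a $K$-coalgebra with several objects, and let $\mathcal M$ be a right $\mathscr C$-comodule. Let $X\in Ob(\mathscr C)$ and $m\in\mathcal M(X)$. Then there exists a subobject $\mathcal N\subseteq\mathcal M$ in the category $Com^{\mathscr C}$ of right $\mathscr C$-comodules such that $m\in\mathcal N(X)$ and $\mathcal N(Y)$ is a finite dimensional $K$-vector space for every $Y\in Ob(\mathscr C)$.
   Context: A $K$-coalgebra with several objects $\mathscr C$ consists of a set $Ob(\mathscr C)$, a $K$-vector space $\mathscr C(X,Y)$ for all $X,Y\in Ob(\mathscr C)$, $K$-linear comultiplications $\delta_{XYZ}:\mathscr C(X,Z)\to\mathscr C(Y,Z)\otimes\mathscr C(X,Y)$, written $\delta_{XYZ}(f)=f_{Y1}\otimes f_{Y2}$ (summation suppressed), and counits $\epsilon_X:\mathscr C(X,X)\to K$, such that $(\delta_{YWZ}\otimes \mathrm{id})\circ\delta_{XYZ}=(\mathrm{id}\otimes\delta_{XYW})\circ\delta_{XWZ}$ as maps $\mathscr C(X,Z)\to\mathscr C(W,Z)\otimes\mathscr C(Y,W)\otimes\mathscr C(X,Y)$, and $(\epsilon_Y\otimes\mathrm{id})\circ\delta_{XYY}=\mathrm{id}=(\mathrm{id}\otimes\epsilon_X)\circ\delta_{XXY}$ on $\mathscr C(X,Y)$. Tensor products are over $K$. A right $\mathscr C$-comodule $\mathcal M$ consists of vector spaces $\mathcal M(X)$, $X\in Ob(\mathscr C)$, and linear coactions $\rho_{XY}:\mathcal M(X)\to\mathcal M(Y)\otimes\mathscr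 C(X,Y)$, written $\rho_{XY}(m)=m_{Y0}\otimes m_{Y1}$, such that $(\rho_{ZY}\otimes\mathrm{id}_{\mathscr C(X,Z)})\circ\rho_{XZ}=(\mathrm{id}_{\mathcal M(Y)}\otimes\delta_{XZY})\circ\rho_{XY}$ and $(\mathrm{id}\otimes\epsilon_X)\circ\rho_{XX}=\mathrm{id}$. A morphism $\phi:\mathcal M\to\mathcal N$ is a family of linear maps $\phi(X):\mathcal M(X)\to\mathcal N(X)$ with $\rho^{\mathcal N}_{XY}\circ\phi(X)=(\phi(Y)\otimes\mathrm{id})\circ\rho^{\mathcal M}_{XY}$; this gives the category $Com^{\mathscr C}$. A subobject $\mathcal N\subseteq\mathcal M$ means a family of subspaces $\mathcal N(Y)\subseteq\mathcal M(Y)$ with $\rho_{YZ}(\mathcal N(Y))\subseteq\mathcal N(Z)\otimes\mathscr C(Y,Z)$, so that $\mathcal N$ is a comodule with the restricted coactions. *)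

From HB Require Import structures.
From mathcomp Require Import all_boot all_order all_algebra.
Set Implicit Arguments. Unset Strict Implicit. Unset Printing Implicit Defensive.
Import Order.TTheory GRing.Theory Num.Theory.
Local Open Scope ring_scope.

(* An element of V (x) W is represented by a finite list of pairs
   [(v_1,w_1); ...; (v_n,w_n)] standing for sum_i v_i (x) w_i; similarly for
   triple tensors.  Two representatives denote the same tensor iff all
   functionals phi (x) psi (resp. phi (x) psi (x) chi), with phi, psi, chi
   linear forms, agree on them (over a field these functionals separate the
   points of the tensor product). *)

Section Tensors.
Variable K : fieldType.

Definition lin_form (V : lmodType K) (phi : V -> K) : Prop :=
  forall (a : K) (u v : V), phi (a *: u + v) = a * phi u + phi v.

Definition tensor2 (V W : lmodType K) := seq (V * W).
Definition tensor3 (U V W : lmodType K) := seq (U * V * W).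

Definition teq2 (V W : lmodType K) (t t' : tensor2 V W) : Prop :=
  forall (phi : V -> K) (psi : W -> K), lin_form phi -> lin_form psi ->
    \sum_(p <- t) phi p.1 * psi p.2 = \sum_(p <- t') phi p.1 * psi p.2.

Definition teq3 (U V W : lmodType K) (t t' : tensor3 U V W) : Prop :=
  forall (phi : U -> K) (psi : V -> K) (chi : W -> K),
    lin_form phi -> lin_form psi -> lin_form chi ->
    \sum_(p <- t) phi p.1.1 * psi p.1.2 * chi p.2
    = \sum_(p <- t') phi p.1.1 * psi p.1.2 * chi p.2.

Definition lin_to_tensor (V V' W : lmodType K) (f : V -> tensor2 V' W) : Prop :=
  forall (a : K) (u v : V),
    teq2 (f (a *: u + v)) ([seq (a *: p.1, p.2) | p <- f u] ++ f v).

Definition is_coalgebra (Ob : Type) (C : Ob -> Ob -> lmodType K)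
  (delta : forall X Y Z : Ob, C X Z -> tensor2 (C Y Z) (C X Y))
  (eps : forall X : Ob, C X X -> K) : Prop :=
  (forall X Y Z, lin_to_tensor (delta X Y Z)) /\
  (forall X, lin_form (eps X)) /\
  (* coassociativity: (delta_YWZ (x) id) o delta_XYZ = (id (x) delta_XYW) o delta_XWZ *)
  (forall X Y W Z (f : C X Z),
     teq3 (flatten [seq [seq (q.1, q.2, p.2) | q <- delta Y W Z p.1]
                   | p <- delta X Y Z f])
          (flatten [seq [seq (p.1, q.1, q.2) | q <- delta X Y W p.2]
                   | p <- delta X W Z f])) /\
  (forall X Y (f : C X Y),
     \sum_(p <- delta X Y Y f) eps Y p.1 *: p.2 = f) /\
  (forall X Y (f : C X Y),
     \sum_(p <- delta X X Y f) eps X p.2 *: p.1 = f).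

Definition is_right_comodule (Ob : Type) (C : Ob -> Ob -> lmodType K)
  (delta : forall X Y Z : Ob, C X Z -> tensor2 (C Y Z) (C X Y))
  (eps : forall X : Ob, C X X -> K)
  (M : Ob -> lmodType K) (rho : forall X Y : Ob, M X -> tensor2 (M Y) (C X Y))
  : Prop :=
  (forall X Y, lin_to_tensor (rho X Y)) /\
  (* (rho_ZY (x) id) o rho_XZ = (id (x) delta_XZY) o rho_XY *)
  (forall X Z Y (m : M X),
     teq3 (flatten [seq [seq (q.1, q.2, p.2) | q <- rho Z Y p.1]
                   | p <- rho X Z m])
          (flatten [seq [seq (p.1, q.1, q.2) | q <- delta X Z Y p.2]
                   | p <- rho X Y m])) /\
  (forall X (m : M X), \sum_(p <- rho X X m) eps X p.2 *: p.1 = m).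

Definition is_subspace (V : lmodType K) (N : V -> Prop) : Prop :=
  N 0 /\ forall (a : K) (u v : V), N u -> N v -> N (a *: u + v).

Definition is_subcomodule (Ob : Type) (C : Ob -> Ob -> lmodType K)
  (M : Ob -> lmodType K) (rho : forall X Y : Ob, M X -> tensor2 (M Y) (C X Y))
  (N : forall Y : Ob, M Y -> Prop) : Prop :=
  (forall Y, is_subspace (N Y)) /\
  (forall Y Z (m : M Y), N Y m ->
     exists t : tensor2 (M Z) (C Y Z),
       teq2 (rho Y Z m) t /\ (forall p, p \in t -> N Z p.1)).

Definition fin_dim_subspace (V : lmodType K) (N : V -> Prop) : Prop :=
  exists s : seq V, (forall x, x \in s -> N x) /\
    forall v, N v -> exists c : 'I_(size s) -> K,
      v = \sum_(i < size s) c i *: s`_i.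

End Tensors.

From HB Require Import structures.
From mathcomp Require Import all_boot all_order all_algebra.
From mathcomp Require Import ring.
From Stdlib Require Import Classical_Prop.
(* Put N(Y) = { (id (x) g) rho_XY(m) | g a linear form on C(X,Y) }.  It is a
   subspace, and it contains m = (id (x) eps_X) rho_XX(m) by the counit axiom.
   Writing rho_XY(m) = sum_j v_j (x) w_j with w_j admitting dual forms chi_i
   (chi_i(w_j) = delta_ij) shows that N(Y) is the span of the v_j, hence finite
   dimensional.  Coassociativity of rho rewrites rho_YZ((id (x) g) rho_XY(m)) as
   (id (x) h) rho_XZ(m) with h = (id (x) g) delta_XYZ, a tensor whose left
   factors are multiples of the v_j for Z, i.e. lie in N(Z). *)

Set Implicit Arguments. Unset Strict Implicit. Unset Printing Implicit Defensive.
Import GRing.Theory.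
Local Open Scope ring_scope.

Lemma sum_ord_mulrn_eq (Z : nmodType) n (F : nat -> Z) j : (j < n)%N ->
  \sum_(k < n) F k *+ (k == j :> nat) = F j.
Proof.
move=> ltjn; rewrite (bigD1 (Ordinal ltjn)) //= eqxx big1 ?addr0 // => k.
by rewrite -val_eqE /= => /negbTE ->.
Qed.

Section LinearForms.
Variables (K : fieldType) (V : lmodType K).
Implicit Types (phi psi : V -> K) (u v : V).

Lemma lin_form0 phi : lin_form phi -> phi 0 = 0.
Proof.
move=> lphi; have := lphi 1 0 0; rewrite scale1r addr0 mul1r => e.
by apply: (@addrI _ (phi 0)); rewrite -e addr0.
Qed.

Lemma lin_formZ phi a u : lin_form phi -> phi (a *: u) = a * phi u.
Proof. by move=> lphi; rewrite -[a *: u]addr0 lphi lin_form0 ?addr0. Qed.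

Lemma lin_formD phi u v : lin_form phi -> phi (u + v) = phi u + phi v.
Proof. by move=> lphi; have := lphi 1 u v; rewrite scale1r mul1r. Qed.

Lemma lin_formB phi u v : lin_form phi -> phi (u - v) = phi u - phi v.
Proof. by move=> lphi; rewrite lin_formD // -scaleN1r lin_formZ // mulN1r. Qed.

Lemma lin_form_sumZ phi I (s : seq I) (a : I -> K) (F : I -> V) :
  lin_form phi -> phi (\sum_(i <- s) a i *: F i) = \sum_(i <- s) a i * phi (F i).
Proof.
move=> lphi; elim: s => [|i s IHs]; first by rewrite !big_nil lin_form0.
by rewrite !big_cons lin_formD // lin_formZ // IHs.
Qed.

Lemma lin_form_comb I (s : seq I) (a : I -> K) (f : I -> V -> K) :
  (forall i, lin_form (f i)) -> lin_form (fun x => \sum_(i <- s) a i * f i x).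
Proof.
move=> lf b u v; rewrite mulr_sumr -big_split /=; apply: eq_bigr => i _.
by rewrite lf mulrDr !mulrA [a i * b]mulrC.
Qed.

Lemma subspaceZ (N : V -> Prop) a u : is_subspace N -> N u -> N (a *: u).
Proof. by move=> [N0 Nlin] Nu; rewrite -[a *: u]addr0; apply: Nlin. Qed.

End LinearForms.

Section Contraction.
Variables (K : fieldType) (V W : lmodType K).
Implicit Types (t : tensor2 V W) (phi : V -> K) (g psi : W -> K).

Definition tensor2_eval phi psi t : K := \sum_(p <- t) phi p.1 * psi p.2.

Definition contract t g : V := \sum_(p <- t) g p.2 *: p.1.

Lemma tensor2_eval_contract phi psi t :
  lin_form phi -> tensor2_eval phi psi t = phi (contract t psi).
Proof.
by move=> lphi; rewrite lin_form_sumZ //; apply: eq_bigr => p _; rewrite mulrC.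
Qed.

Definition contract_image t (x : V) : Prop := exists2 g, lin_form g & x = contract t g.

Lemma contract_image_subspace t : is_subspace (contract_image t).
Proof.
split.
  exists (fun _ => 0); first by move=> a u v; rewrite mulr0 addr0.
  by rewrite /contract big1 // => p _; rewrite scale0r.
move=> a _ _ [g lg ->] [h lh ->].
exists (fun x => a * g x + h x).
  by move=> b u v; rewrite lg lh; ring.
rewrite /contract scaler_sumr -big_split; apply: eq_bigr => p _.
by rewrite scalerDl scalerA.
Qed.

Definition biorthogonal n (w : nat -> W) (chi : nat -> W -> K) : Prop :=
  (forall i, lin_form (chi i)) /\
  forall i j, (i < n)%N -> (j < n)%N -> chi i (w j) = (i == j)%:R.

Definition tensor_decomp t n (v : nat -> V) (w : nat -> W) : Prop :=
  forall g, lin_form g -> contract t g = \sum_(j < n) g (w j) *: v j.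

Section Biorthogonal.
Variables (n : nat) (w : nat -> W) (chi : nat -> W -> K).
Hypothesis bio : biorthogonal n w chi.

Lemma biorthogonal_sum (a : nat -> K) j : (j < n)%N ->
  \sum_(k < n) a k * chi k (w j) = a j.
Proof.
move=> ltjn; rewrite -(sum_ord_mulrn_eq a ltjn); apply: eq_bigr => k _.
by rewrite bio.2 // mulr_natr.
Qed.

Lemma biorthogonal_residual c i : (i < n)%N ->
  chi i (c - \sum_(j < n) chi j c *: w j) = 0.
Proof.
move=> ltin; have lchi := bio.1 i; rewrite lin_formB // lin_form_sumZ //.
rewrite (eq_bigr (fun j : 'I_n => chi j c *+ (j == i :> nat))).
  by rewrite (sum_ord_mulrn_eq (chi^~ c)) // subrr.
by move=> j _; rewrite bio.2 // eq_sym mulr_natr.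
Qed.

Lemma biorthogonal_extend psi d :
  lin_form psi -> psi d != 0 -> (forall i, (i < n)%N -> chi i d = 0) ->
  biorthogonal n.+1 (fun j => if j is j'.+1 then w j' else d)
    (fun j => if j is j'.+1 then chi j'
              else fun x => (psi x - \sum_(k < n) psi (w k) * chi k x) / psi d).
Proof.
move=> lpsi psid0 chid0; split.
  case=> [|i] //=; last exact: bio.1.
  move=> a u v; rewrite lpsi.
  by rewrite (lin_form_comb (index_enum 'I_n) _ (fun k : 'I_n => bio.1 k)); ring.
case=> [|i] [|j] //= ltin ltjn.
- rewrite big1 ?subr0 ?divff // => k _.
  by rewrite chid0 ?mulr0.
- by rewrite (biorthogonal_sum (fun k => psi (w k))) // subrr mul0r.
- exact: chid0.
- exact: bio.2.
Qed.

Lemma tensor_decomp_vector t v j : tensor_decomp t n v w -> (j < n)%N ->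
  v j = contract t (chi j).
Proof.
move=> dec ltjn; rewrite dec; last exact: bio.1.
rewrite -(sum_ord_mulrn_eq v ltjn); apply: eq_bigr => k _.
by rewrite bio.2 // scaler_nat eq_sym.
Qed.

End Biorthogonal.

Lemma tensor_decomp_cons t n v w g (e : nat -> K) m c :
  tensor_decomp t n v w -> lin_form g ->
  contract ((m, c) :: t) g
  = g (c - \sum_(j < n) e j *: w j) *: m + \sum_(j < n) g (w j) *: (v j + e j *: m).
Proof.
move=> dec lg; rewrite /contract big_cons -/(contract t g) dec //=.
rewrite lin_formB ?lin_form_sumZ // scalerBl.
under [in RHS]eq_bigr do rewrite scalerDr scalerA.
rewrite big_split /= -scaler_suml.
have -> : \sum_(j < n) g (w j) * e j = \sum_(j < n) e j * g (w j).
  by apply: eq_bigr => j _; rewrite mulrC.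
by rewrite addrCA !addrA subrK addrC.
Qed.

Lemma tensor_decomp_exists t :
  exists n v w chi, biorthogonal n w chi /\ tensor_decomp t n v w.
Proof.
elim: t => [|[m c] t [n [v [w [chi [bio dec]]]]]].
  exists 0%N, (fun _ => 0), (fun _ => 0), (fun _ _ => 0); split.
    by split=> // i a u v; rewrite mulr0 addr0.
  by move=> g _; rewrite /contract big_nil big_ord0.
pose d := c - \sum_(j < n) chi j c *: w j.
have dec' := tensor_decomp_cons (fun j => chi j c) m c dec.
(* No basis of W is available: either some linear form detects the residual d,
   which then extends the biorthogonal system, or no contraction sees the term
   m (x) d and it can be dropped. *)
have [[psi lpsi psid0] | ] :=
  classic (exists2 psi, lin_form psi & psi d != 0); last first.
  move=> d_null; exists n, (fun j => v j + chi j c *: m), w, chi; split=> // g lg.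
  have gd0 : g d = 0 by apply/eqP/negPn/negP => gd_neq0; apply: d_null; exists g.
  by rewrite dec' // gd0 scale0r add0r.
exists n.+1, (fun j => if j is j'.+1 then v j' + chi j' c *: m else m).
exists (fun j => if j is j'.+1 then w j' else d).
exists (fun j => if j is j'.+1 then chi j'
            else fun x => (psi x - \sum_(k < n) psi (w k) * chi k x) / psi d).
split; first exact (biorthogonal_extend bio lpsi psid0 (biorthogonal_residual bio c)).
by move=> g lg; rewrite dec' // big_ord_recl.
Qed.

Lemma contract_image_fin_dim t : fin_dim_subspace (contract_image t).
Proof.
have [n [v [w [chi [bio dec]]]]] := tensor_decomp_exists t.
exists (mkseq v n); split.
  move=> x /mapP [j]; rewrite mem_iota leq0n add0n /= => ltjn ->.
  by exists (chi j); [exact: bio.1 | exact (tensor_decomp_vector bio dec ltjn)].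
move=> _ [g lg ->]; rewrite size_mkseq; exists (fun j => g (w j)).
by rewrite dec //; apply: eq_bigr => j _; rewrite nth_mkseq.
Qed.

End Contraction.

Lemma big_flatten_map (R : nmodType) I J T (t : seq I) (s : I -> seq J)
    (F : I -> J -> T) (h : T -> R) :
  \sum_(x <- flatten [seq [seq F p q | q <- s p] | p <- t]) h x
  = \sum_(p <- t) \sum_(q <- s p) h (F p q).
Proof. by rewrite big_flatten big_map; apply: eq_bigr => p _; rewrite big_map. Qed.

Lemma lin_to_tensor_eval (K : fieldType) (U V W : lmodType K)
    (f : U -> tensor2 V W) (phi : V -> K) (psi : W -> K) :
  lin_to_tensor f -> lin_form phi -> lin_form psi ->
  lin_form (fun u => tensor2_eval phi psi (f u)).
Proof.
move=> flin lphi lpsi a u v; rewrite /tensor2_eval (flin a u v phi psi) //.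
rewrite big_cat big_map mulr_sumr /=; congr (_ + _); apply: eq_bigr => p _.
by rewrite lin_formZ // mulrA.
Qed.

Section ComoduleContraction.
Variables (K : fieldType) (Ob : Type) (C : Ob -> Ob -> lmodType K)
  (delta : forall X Y Z : Ob, C X Z -> tensor2 (C Y Z) (C X Y))
  (eps : forall X : Ob, C X X -> K)
  (M : Ob -> lmodType K) (rho : forall X Y : Ob, M X -> tensor2 (M Y) (C X Y)).
Arguments delta : clear implicits.
Arguments rho : clear implicits.
Hypothesis delta_lin : forall X Y Z, lin_to_tensor (delta X Y Z).
Hypothesis rhoC : is_right_comodule delta eps rho.

Lemma rho_contract X Y Z (m : M X) (phi : M Z -> K) (psi : C Y Z -> K)
    (chi : C X Y -> K) :
  lin_form phi -> lin_form psi -> lin_form chi ->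
  tensor2_eval phi psi (rho Y Z (contract (rho X Y m) chi))
  = phi (contract (rho X Z m) (fun c => tensor2_eval psi chi (delta X Y Z c))).
Proof.
move=> lphi lpsi lchi; have [rho_lin [rho_coassoc _]] := rhoC.
have := rho_coassoc X Y Z m phi psi chi lphi lpsi lchi.
rewrite !big_flatten_map /= => coassoc.
rewrite -tensor2_eval_contract //.
rewrite (lin_form_sumZ _ _ _ (lin_to_tensor_eval (rho_lin Y Z) lphi lpsi)).
transitivity (\sum_(p <- rho X Y m) \sum_(q <- rho Y Z p.1) phi q.1 * psi q.2 * chi p.2).
  by apply: eq_bigr => p _; rewrite mulr_sumr; apply: eq_bigr => q _; rewrite mulrC.
rewrite coassoc; apply: eq_bigr => p _; rewrite mulr_sumr.
by apply: eq_bigr => q _; rewrite mulrA.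
Qed.

Lemma contract_image_subcomodule X (m : M X) :
  is_subcomodule rho (fun Y => contract_image (rho X Y m)).
Proof.
split=> [Y | Y Z _ [g lg ->]]; first exact: contract_image_subspace.
have [n [v [w [chi [bio dec]]]]] := tensor_decomp_exists (rho X Z m).
exists (flatten [seq [seq (g q.2 *: v j, q.1) | q <- delta X Y Z (w j)]
                | j <- index_iota 0 n]); split.
- move=> phi psi lphi lpsi.
  rewrite -[LHS]/(tensor2_eval phi psi (rho Y Z (contract (rho X Y m) g))).
  rewrite big_flatten_map big_mkord.
  have [rho_lin _] := rhoC.
  rewrite rho_contract // dec; last exact: lin_to_tensor_eval.
  rewrite lin_form_sumZ //; apply: eq_bigr => j _.
  rewrite /tensor2_eval mulr_suml; apply: eq_bigr => q _.
  by rewrite /= lin_formZ //; ring.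
- move=> p /flattenP [s /mapP [j]]; rewrite mem_index_iota => ltjn -> /mapP [q _ ->] /=.
  apply: subspaceZ; first exact: contract_image_subspace.
  by exists (chi j); [exact: bio.1 | exact (tensor_decomp_vector bio dec ltjn)].
Qed.

End ComoduleContraction.

Theorem proposition2p4 (K : fieldType) (Ob : Type)
  (C : Ob -> Ob -> lmodType K)
  (delta : forall X Y Z : Ob, C X Z -> tensor2 (C Y Z) (C X Y))
  (eps : forall X : Ob, C X X -> K)
  (M : Ob -> lmodType K) (rho : forall X Y : Ob, M X -> tensor2 (M Y) (C X Y)) :
  is_coalgebra delta eps ->
  is_right_comodule delta eps rho ->
  forall (X : Ob) (m : M X),
  exists N : forall Y : Ob, M Y -> Prop,
    is_subcomodule rho N /\ N X m /\ (forall Y : Ob, fin_dim_subspace (N Y)).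
Proof.
move=> [delta_lin [eps_lin _]] rhoC X m.
exists (fun Y => contract_image (rho X Y m)); split; last split.
- exact (contract_image_subcomodule delta_lin rhoC m).
- have [_ [_ rho_counit]] := rhoC.
  by exists (eps X); [exact: eps_lin | rewrite /contract rho_counit].
- by move=> Y; apply: contract_image_fin_dim.
Qed.
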